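(* Let $(N,p)$ be a majorant of a second-order polynomial $P$. Define $p_i\colon\mathbb N^{\mathbb N}\times\mathbb N\to\mathbb N$ recursively by $p_0(l,n)=p(n)$ and $p_{i+1}(l,n)=p(\max\{n,l(p_i(l,n))\})$. Then for every monotone $l\colon\mathbb N\to\mathbb N$ and every $n\in\mathbb N$, $P(l,n)\le p_N(l,n)$.
   Context: Second-order polynomials are the smallest class of functions $P\colon\mathbb N^{\mathbb N}\times\mathbb N\to\mathbb N$ that contains all $(l,n)\mapsto p(n)$ for polynomials $p$ with natural-number coefficients, and is closed under pointwise sum, pointwise product, and $P\mapsto P^+$ with $P^+(l,n)=l(P(l,n))$. A polynomial tree is a finite rooted tree in which each node is labeled by a polynomial in $\mathbb N[X_0,\ldots,X_k]$, $k$ being the number of children of that node, with the children of each node linearly ordered. Recursively assign functions to nodes: a leaf labeled $t$ gets $(l,n)\mapsto t(n)$; a node labeled $t$ with children (in order) assigned $P_1,\ldots,P_k$ gets $(l,n)\mapsto t(n,l(P_1(l,n)),\ldots,l(P_k(l,n)))$. The tree is a description of $P$ if $P$ is assigned to the root. A pair $(N,p)$ with $N\in\mathbb N$ and $p\colon\mathbb N\to\mathbb N$ is a majorant of $P$ if $p(n)\ge n$ for all $n$ and there is a description $T$ of $P$ such that $N$ is the height of $T$ (a single-node tree has height $0$) and for every $n$ and every node $t$ of $T$, $p(n)\ge t(n,\ldots,n)$. *)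

From Stdlib Require Import Arith List.
Import ListNotations.

(* Polynomial expressions with natural-number coefficients in variables
   X_0, X_1, ...  Every element of N[X_0,...,X_k] is denoted by such an
   expression whose variables have index <= k. *)
Inductive pexpr : Type :=
| PConst : nat -> pexpr
| PVar : nat -> pexpr
| PAdd : pexpr -> pexpr -> pexpr
| PMul : pexpr -> pexpr -> pexpr.

Fixpoint peval (env : nat -> nat) (e : pexpr) : nat :=
  match e with
  | PConst c => c
  | PVar i => env i
  | PAdd a b => peval env a + peval env b
  | PMul a b => peval env a * peval env b
  end.

Fixpoint pvars_le (k : nat) (e : pexpr) : Prop :=
  match e with
  | PConst _ => True
  | PVar i => i <= k
  | PAdd a b => pvars_le k a /\ pvars_le k b
  | PMul a b => pvars_le k a /\ pvars_le k b
  end.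

Inductive SOP : ((nat -> nat) -> nat -> nat) -> Prop :=
| SOP_poly (e : pexpr) : pvars_le 0 e -> SOP (fun l n => peval (fun _ => n) e)
| SOP_add P Q : SOP P -> SOP Q -> SOP (fun l n => P l n + Q l n)
| SOP_mul P Q : SOP P -> SOP Q -> SOP (fun l n => P l n * Q l n)
| SOP_plus P : SOP P -> SOP (fun l n => l (P l n)).

Inductive ptree : Type :=
| PNode : pexpr -> list ptree -> ptree.

Fixpoint tree_wf (T : ptree) : Prop :=
  match T with
  | PNode t ch => pvars_le (length ch) t /\ fold_right and True (map tree_wf ch)
  end.

(* The function assigned to a node: t(n, l(P_1(l,n)), ..., l(P_k(l,n))). *)
Fixpoint tree_fun (T : ptree) (l : nat -> nat) (n : nat) : nat :=
  match T with
  | PNode t ch =>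
      peval (fun i => match i with
                      | 0 => n
                      | S j => l (nth j (map (fun c => tree_fun c l n) ch) 0)
                      end) t
  end.

Fixpoint tree_height (T : ptree) : nat :=
  match T with
  | PNode _ [] => 0
  | PNode _ ch => S (fold_right max 0 (map tree_height ch))
  end.

Fixpoint tree_bounded (p : nat -> nat) (T : ptree) : Prop :=
  match T with
  | PNode t ch => (forall n, peval (fun _ => n) t <= p n)
                  /\ fold_right and True (map (tree_bounded p) ch)
  end.

Definition description (T : ptree) (P : (nat -> nat) -> nat -> nat) : Prop :=
  tree_wf T /\ forall l n, tree_fun T l n = P l n.

Definition majorant (N : nat) (p : nat -> nat) (P : (nat -> nat) -> nat -> nat) : Prop :=
  (forall n, n <= p n) /\
  exists T, description T P /\ tree_height T = N /\ tree_bounded p T.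

Fixpoint p_iter (p : nat -> nat) (i : nat) (l : nat -> nat) (n : nat) : nat :=
  match i with
  | 0 => p n
  | S i' => p (Nat.max n (l (p_iter p i' l n)))
  end.

Definition monotone (l : nat -> nat) : Prop := forall a b, a <= b -> l a <= l b.

(* Every node of a description tree evaluates a label polynomial at n and at
   l applied to the values of its children; since the labels have natural
   coefficients they are monotone, so the node's value is at most
   t(k,...,k) <= p(k) as soon as k dominates n and these l-values.  By
   induction on the height, a subtree of height at most h is bounded by p(k)
   for every k above max(n, l(p_{h-1}(l,n))), using the monotonicity of l to
   pass the bound on the children through l. *)

From Stdlib Require Import Arith List Lia.

Definition p_iter_arg (p : nat -> nat) (i : nat) (l : nat -> nat) (n : nat) : nat :=
  match i with
  | 0 => n
  | S i' => Nat.max n (l (p_iter p i' l n))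
  end.

Lemma p_iter_argE p i l n : p_iter p i l n = p (p_iter_arg p i l n).
Proof. now destruct i. Qed.

Lemma le_p_iter_arg p i l n : n <= p_iter_arg p i l n.
Proof. destruct i; simpl; lia. Qed.

Lemma peval_le_env (k : nat) (e : pexpr) (env1 env2 : nat -> nat) :
  pvars_le k e -> (forall i, i <= k -> env1 i <= env2 i) ->
  peval env1 e <= peval env2 e.
Proof.
  intros Hvars Henv; induction e as [c|i|a IHa b IHb|a IHa b IHb]; simpl in *.
  - apply le_n.
  - now apply Henv.
  - destruct Hvars; apply Nat.add_le_mono; auto.
  - destruct Hvars; apply Nat.mul_le_mono; auto.
Qed.

Lemma In_fold_and_map {A : Type} (Q : A -> Prop) (xs : list A) :
  fold_right and True (map Q xs) -> forall x, In x xs -> Q x.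
Proof.
  induction xs as [|y xs IH]; simpl; [contradiction|].
  intros [Hy Hxs] x [<-|Hx]; auto.
Qed.

Lemma tree_height_child (t : pexpr) (ch : list ptree) (c : ptree) :
  In c ch -> S (tree_height c) <= tree_height (PNode t ch).
Proof.
  intros Hc.
  assert (Hmax : tree_height c <= fold_right max 0 (map tree_height ch)).
  { clear t; induction ch as [|c' ch IH]; simpl in *; [contradiction|].
    destruct Hc as [<-|Hc]; [lia|]; specialize (IH Hc); lia. }
  destruct ch; [contradiction|]; simpl in *; lia.
Qed.

Lemma tree_fun_node_le (p l : nat -> nat) (n k : nat) (t : pexpr) (ch : list ptree) :
  pvars_le (length ch) t -> (forall m, peval (fun _ => m) t <= p m) ->
  n <= k -> (forall c, In c ch -> l (tree_fun c l n) <= k) ->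
  tree_fun (PNode t ch) l n <= p k.
Proof.
  intros Hvars Hlabel Hn Hch; simpl.
  apply (Nat.le_trans _ (peval (fun _ => k) t)); [|apply Hlabel].
  apply (peval_le_env (length ch)); [exact Hvars|].
  intros [|j] Hj; [exact Hn|].
  assert (Hnth : In (nth j (map (fun c => tree_fun c l n) ch) 0)
                    (map (fun c => tree_fun c l n) ch))
    by (apply nth_In; rewrite length_map; lia).
  apply in_map_iff in Hnth as [c [<- Hc]].
  now apply Hch.
Qed.

Section TreeBound.

Variables (p l : nat -> nat) (n : nat).
Hypothesis l_monotone : monotone l.

(* Quantifying over every k above the argument of p is what lets children of
   smaller height be compared with p_h, as p itself need not be monotone. *)
Lemma tree_fun_le_p (h : nat) :
  forall T, tree_wf T -> tree_bounded p T -> tree_height T <= h ->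
  forall k, p_iter_arg p h l n <= k -> tree_fun T l n <= p k.
Proof.
  induction h as [|h IH];
    intros [t ch] [Hvars Hwf] [Hlabel Hbounded] Hheight k Hk;
    assert (Hn : n <= k) by (eapply Nat.le_trans; [apply le_p_iter_arg | exact Hk]);
    apply tree_fun_node_le; auto;
    intros c Hc; pose proof (tree_height_child t ch c Hc) as Hc_height.
  - lia.
  - assert (Hc_le : tree_fun c l n <= p_iter p h l n).
    { rewrite p_iter_argE.
      apply IH; [exact (In_fold_and_map _ _ Hwf c Hc)
                |exact (In_fold_and_map _ _ Hbounded c Hc)
                |lia|apply le_n]. }
    apply l_monotone in Hc_le; simpl in Hk; lia.
Qed.

End TreeBound.

Theorem mainTheorem5 :
  forall (P : (nat -> nat) -> nat -> nat) (N : nat) (p : nat -> nat),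
    SOP P -> majorant N p P ->
    forall (l : nat -> nat), monotone l ->
    forall n : nat, P l n <= p_iter p N l n.
Proof.
  intros P N p _ [_ [T [[Hwf Hdesc] [Hheight Hbounded]]]] l Hl n.
  rewrite <- Hdesc, p_iter_argE.
  apply (tree_fun_le_p p l n Hl N T Hwf Hbounded); lia.
Qed.
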